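(* Let $k$ be a difference field of characteristic $0$, $R=k\{y_1,\ldots,y_n\}$, $I$ a radical well-mixed monomial $\sigma$-ideal, and $\mathbf{a}\in(\mathbb{N}\cup\{-1\})^n$ with $\mathbf{a}\geqslant\mathbf{c}$ for every character vector $\mathbf{c}$ of $I$. If $\mathbf{b}\in(\mathbb{N}\cup\{-1\})^n$ with $\mathbf{b}\leqslant\mathbf{a}$, then $\mathbf{y}^{x^{\mathbf{b}}}\notin I$ if and only if $\mathbf{y}^{x^{\mathbf{a}-\mathbf{b}}}\in I^{[\mathbf{a}]}$.
   Context: A difference field is a field $k$ with a ring endomorphism $\sigma$; $R=k\{y_1,\ldots,y_n\}$ is the polynomial ring over $k$ in the variables $\sigma^j(y_i)$, with $\sigma$ extended naturally. For $p=\sum_ic_ix^i\in\mathbb{N}[x]$ and $a\in R$, $a^p=\prod_i(\sigma^i(a))^{c_i}$; $\mathbf{y}^{\mathbf{u}}=y_1^{u_1}\cdots y_n^{u_n}$. For an integer vector $\mathbf{b}$ with entries $\ge-1$, $x^{\mathbf{b}}=(x^{b_1},\ldots,x^{b_n})$ with $x^{-1}=0$; $\mathbf{a}-\mathbf{b}$ is coordinatewise subtraction. A $\sigma$-ideal is an ideal stable under $\sigma$; monomial if generated by monomials; well-mixed if $ab\in I\Rightarrow a\sigma(b)\in I$. $\langle F\rangle_r$ is the smallest radical well-mixed $\sigma$-ideal containing $F$. For $\mathbf{b}\in(\mathbb{N}\cup\{-1\})^n$, $\mathfrak{m}^{\mathbf{b}}$ is the $\sigma$-ideal generated by $\{y_i^{x^{b_i}}:b_i\ne-1\}$.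 Vectors are compared componentwise. The character vectors of $I$ are the finitely many vectors $\mathbf{a}_1,\ldots,\mathbf{a}_m\in(\mathbb{N}\cup\{-1\})^n$ forming a minimal set with $I=\langle\mathbf{y}^{x^{\mathbf{a}_1}},\ldots,\mathbf{y}^{x^{\mathbf{a}_m}}\rangle_r$ (equivalently, the componentwise-minimal $\mathbf{a}$ with $\mathbf{y}^{x^{\mathbf{a}}}\in I$). For $\mathbf{b}\leqslant\mathbf{a}$, $\mathbf{a}\backslash\mathbf{b}$ has $i$-th coordinate $a_i+1-b_i$ if $b_i\ge0$ and $-1$ if $b_i=-1$. The Alexander dual is $I^{[\mathbf{a}]}=\bigcap\{\mathfrak{m}^{\mathbf{a}\backslash\mathbf{c}}:\mathbf{c}\text{ a character vector of }I\}$. *)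

From HB Require Import structures.
From mathcomp Require Import all_boot all_algebra.
From mathcomp Require Import finmap.
From mathcomp.multinomials Require Import monalg.

Set Implicit Arguments.
Unset Strict Implicit.
Unset Printing Implicit Defensive.

Import GRing.Theory.
Local Open Scope ring_scope.

Section DiffPoly.
Variables (k : fieldType) (sigma : {rmorphism k -> k}) (n : nat).

(* Variables sigma^j(y_i) are indexed by v = (i, j). *)
Definition var := ('I_n * nat)%type.

Definition dpoly := {malg k[{cmonom var}]}.

Definition yvar (i : 'I_n) : dpoly := << ucm ((i, 0%N) : var) >>.

(* shift of a monomial: every variable (i, j) is replaced by (i, j+1) *)
Definition shiftm (m : {cmonom var}) : {cmonom var} :=
  [cmonom m ((v.1, v.2.-1) : var) |
     v in [fset ((w.1, w.2.+1) : var) | w in finsupp m]%fset]%M.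

Definition sigmaR (p : dpoly) : dpoly :=
  mmap (fun c : k => (sigma c)%:MP) (fun m => << shiftm m >>) p.

Definition is_ideal (I : dpoly -> Prop) : Prop :=
  [/\ I 0, (forall a b, I a -> I b -> I (a + b))
    & (forall r a, I a -> I (r * a))].

Definition sigma_stable (I : dpoly -> Prop) : Prop :=
  forall a, I a -> I (sigmaR a).

Definition is_sigma_ideal (I : dpoly -> Prop) : Prop :=
  is_ideal I /\ sigma_stable I.

Definition is_radical (I : dpoly -> Prop) : Prop :=
  forall a e, I (a ^+ e.+1) -> I a.

Definition is_well_mixed (I : dpoly -> Prop) : Prop :=
  forall a b, I (a * b) -> I (a * sigmaR b).

Definition ideal_gen (F : dpoly -> Prop) (x : dpoly) : Prop :=
  forall J, is_ideal J -> (forall f, F f -> J f) -> J x.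

Definition sigma_ideal_gen (F : dpoly -> Prop) (x : dpoly) : Prop :=
  forall J, is_sigma_ideal J -> (forall f, F f -> J f) -> J x.

Definition is_monomial_ideal (I : dpoly -> Prop) : Prop :=
  exists M : {cmonom var} -> Prop,
    forall x, I x <-> ideal_gen (fun f => exists2 m, M m & f = << m >>) x.

Definition nvec := 'I_n -> int.
Definition valid_vec (a : nvec) : Prop := forall i, (-1 <= a i)%R.
Definition vle (a b : nvec) : Prop := forall i, (a i <= b i)%R.

(* y^{x^b} = prod_i (sigma^{b_i} (y_i)), with y_i^{x^{-1}} = y_i^0 = 1 *)
Definition ypow (b : nvec) : dpoly :=
  \prod_(i < n | (0 <= b i)%R) iter `|b i|%N sigmaR (yvar i).

Definition mideal (b : nvec) : dpoly -> Prop :=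
  sigma_ideal_gen (fun f => exists2 i : 'I_n, b i != -1 &
                               f = iter `|b i|%N sigmaR (yvar i)).

Definition is_char_vec (I : dpoly -> Prop) (c : nvec) : Prop :=
  [/\ valid_vec c, I (ypow c) &
      forall c', valid_vec c' -> vle c' c -> I (ypow c') -> c' = c].

Definition vbslash (a b : nvec) : nvec :=
  fun i => if (0 <= b i)%R then a i + 1 - b i else -1.

Definition vsub (a b : nvec) : nvec := fun i => a i - b i.

Definition alexander_dual (I : dpoly -> Prop) (a : nvec) (x : dpoly) : Prop :=
  forall c, is_char_vec I c -> mideal (vbslash a c) x.

End DiffPoly.

(* Because I is a well-mixed sigma-ideal, y^{x^c} in I forces y^{x^b} in I for
   every b >= c, so y^{x^b} lies in I exactly when b dominates a character vector
   of I. On the dual side, y^{x^e} lies in m^d exactly when e_i >= d_i for some i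
   with d_i <> -1: one direction is immediate, and for the other the evaluation
   sending sigma^j(y_i) to 0 when j >= d_i and to 1 otherwise has, together with
   all its sigma-shifts, m^d in its kernel but sends y^{x^e} to 1. For d = a\c
   and e = a - b the condition e_i >= d_i reads b_i < c_i, and the two
   characterizations match. *)

From HB Require Import structures.
From mathcomp Require Import all_boot all_algebra.
From mathcomp Require Import finmap.
From mathcomp.multinomials Require Import monalg.
From mathcomp Require Import zify.
From Stdlib Require Import Classical FunctionalExtensionality.
Import GRing.Theory.
Local Open Scope ring_scope.
Set Implicit Arguments.
Unset Strict Implicit.

Section IterRMorphism.
Variables (R : pzRingType) (f : {rmorphism R -> R}).

Lemma iter_rmorph0 t : iter t f 0 = 0.
Proof. by elim: t => // t IH; rewrite iterS IH rmorph0. Qed.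

Lemma iter_rmorphD t : {morph iter t f : p q / p + q}.
Proof. by elim: t => // t IH p q; rewrite !iterS IH rmorphD. Qed.

Lemma iter_rmorphM t : {morph iter t f : p q / p * q}.
Proof. by elim: t => // t IH p q; rewrite !iterS IH rmorphM. Qed.

End IterRMorphism.

Lemma has_fsetU (T : choiceType) (P : pred T) (A B : {fset T}) :
  has P (A `|` B)%fset = has P A || has P B.
Proof.
apply/hasP/orP => [[v]|].
  by rewrite in_fsetU => /orP [vA|vB] Pv; [left|right]; apply/hasP; exists v.
by case=> /hasP [v vA Pv]; exists v; rewrite // in_fsetU ?vA ?vB ?orbT.
Qed.

Section Vectors.
Variable n : nat.

Lemma vle_antisym (b c : nvec n) : vle b c -> vle c b -> b = c.
Proof.
move=> le_bc le_cb; apply: functional_extensionality => i.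
by have := le_bc i; have := le_cb i; lia.
Qed.

Lemma not_vle_exists_lt (b c : nvec n) : ~ vle c b -> exists i, b i < c i.
Proof.
move=> not_le; apply: NNPP => no_i; apply: not_le => i.
have : ~ b i < c i by move=> lt_bc; apply: no_i; exists i.
lia.
Qed.

End Vectors.

Section DifferencePolynomials.
Variables (k : fieldType) (sigma : {rmorphism k -> k}) (n : nat).
Local Notation dpoly := (dpoly k n).
Local Notation var := (var n).
Local Notation sigmaR := (@sigmaR k sigma n).
Local Notation ypow := (@ypow k sigma n).
Local Notation mideal := (@mideal k sigma n).

Lemma shiftmE (m : {cmonom var}) (v : var) :
  shiftm m v = if v.2 is j.+1 then m (v.1, j) else 0%N.
Proof.
rewrite /shiftm cmE fsfun_fun; case: v => i [|j] /=.
  by case: ifP => // /imfsetP [w _ []].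
case: ifP => [//|notin]; case: (finsuppP m (i, j)) => // supp.
by move: notin; rewrite (_ : (i, j.+1) = ((i, j).1, (i, j).2.+1)) // in_imfset.
Qed.

Lemma shiftmM (m1 m2 : {cmonom var}) :
  shiftm (mmul m1 m2) = mmul (shiftm m1) (shiftm m2).
Proof. by apply/eqP/cmP => v; rewrite cmM !shiftmE; case: v => i [|j] //=; rewrite cmM. Qed.

Lemma shiftm1 : shiftm (mone : {cmonom var}) = mone.
Proof. by apply/eqP/cmP => v; rewrite shiftmE; case: v => i [|j] /=; rewrite !cm1. Qed.

Lemma shiftmU (i : 'I_n) j : shiftm (ucm ((i, j) : var)) = ucm ((i, j.+1) : var).
Proof.
apply/eqP/cmP => v; rewrite shiftmE /reverse_coercion; case: v => i' [|j'] /=; rewrite !cmU //.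
by rewrite !xpair_eqE andbF.
Qed.

Definition sigma_coef (c : k) : dpoly := (sigma c)%:MP.
HB.instance Definition _ := GRing.RMorphism.copy sigma_coef (malgC \o sigma).

Definition shift_monom (m : {cmonom var}) : dpoly := << shiftm m >>.

Lemma shift_monom_is_mmorphism : mmorphism shift_monom.
Proof.
split=> [m1 m2|]; last by rewrite /shift_monom shiftm1.
by rewrite /shift_monom shiftmM malgM_def fgmulUU mulr1.
Qed.
HB.instance Definition _ :=
  isMultiplicative.Build _ _ shift_monom shift_monom_is_mmorphism.

HB.instance Definition _ := GRing.RMorphism.copy sigmaR (mmap sigma_coef shift_monom).

Lemma sigma_coef1 : sigma_coef 1 = 1.
Proof. by rewrite /sigma_coef rmorph1 mpolyC1E. Qed.

Lemma sigmaRU m : sigmaR << m >> = << shiftm m >>.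
Proof.
change (mmap sigma_coef shift_monom << m >> = << shiftm m >>).
transitivity (sigma_coef 1 * shift_monom m).
  exact: (mmapU (f := sigma_coef) (h := shift_monom) 1 m).
by rewrite sigma_coef1 mul1r.
Qed.

Lemma iter_sigmaR_yvar (i : 'I_n) j :
  iter j sigmaR (yvar k i) = << ucm ((i, j) : var) >>.
Proof.
elim: j => [|j IH]; first exact: erefl.
by rewrite iterS IH sigmaRU shiftmU; reflexivity.
Qed.

Section Truncation.
Variable d : nvec n.

Definition beyond (v : var) : bool := (d v.1 != -1) && (`|d v.1| <= v.2)%N.

Definition trunc_monom (m : {cmonom var}) : k := (~~ has beyond (finsupp m))%:R.

Lemma trunc_monom_is_mmorphism : mmorphism trunc_monom.
Proof.
split=> [m1 m2|]; last by rewrite /trunc_monom mdom1.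
rewrite /trunc_monom mdomD has_fsetU.
by case: (has beyond _); case: (has beyond _); rewrite /= ?mul1r ?mul0r.
Qed.
HB.instance Definition _ :=
  isMultiplicative.Build _ _ trunc_monom trunc_monom_is_mmorphism.

Definition trunc_eval (p : dpoly) : k := mmap idfun trunc_monom p.
HB.instance Definition _ := GRing.RMorphism.copy trunc_eval (mmap idfun trunc_monom).

Lemma trunc_evalU v : trunc_eval << ucm v >> = (~~ beyond v)%:R.
Proof.
transitivity (idfun 1 * trunc_monom (ucm v)); first exact: mmapU.
rewrite mul1r /trunc_monom mdomU; congr (_ %:R); congr negb.
by apply/hasP/idP => [[w /fset1P -> //]|bv]; exists v; rewrite ?fset11.
Qed.

Definition trunc_kernel (p : dpoly) : Prop := forall t, trunc_eval (iter t sigmaR p) = 0.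

Lemma trunc_kernel_sigma_ideal : is_sigma_ideal sigma trunc_kernel.
Proof.
split; [split|].
- by move=> t; rewrite iter_rmorph0 rmorph0.
- by move=> p q Hp Hq t; rewrite iter_rmorphD rmorphD /= Hp Hq addr0.
- by move=> r p Hp t; rewrite iter_rmorphM rmorphM /= Hp mulr0.
- by move=> p Hp t; rewrite -iterSr; apply: Hp.
Qed.

Lemma mideal_sub_trunc_kernel p : mideal d p -> trunc_kernel p.
Proof.
apply; first exact: trunc_kernel_sigma_ideal.
move=> _ [i di ->] t; rewrite -iterD iter_sigmaR_yvar trunc_evalU /beyond /= di.
by rewrite leq_addl.
Qed.

Lemma trunc_eval_ypow (e : nvec n) :
    (forall i, 0 <= e i -> d i != -1 -> (`|e i| < `|d i|)%N) ->
  trunc_eval (ypow e) = 1.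
Proof.
move=> e_lt_d; rewrite rmorph_prod big1 // => i e_ge0.
rewrite /= iter_sigmaR_yvar trunc_evalU /beyond /=.
by case: eqP => //= /eqP /(e_lt_d i e_ge0); rewrite ltnNge => ->.
Qed.

End Truncation.

Lemma mideal_iter_sigmaR (d : nvec n) i m :
  d i != -1 -> (`|d i| <= m)%N -> mideal d (iter m sigmaR (yvar k i)).
Proof.
move=> di le_dm J [_ sigmaJ] gensJ; rewrite -(subnK le_dm) iterD.
elim: (m - _)%N => [|t IH]; first by apply: gensJ; exists i.
by rewrite iterS; apply: sigmaJ.
Qed.

Lemma mideal_ypowP (d e : nvec n) :
  mideal d (ypow e) <-> exists i, [/\ d i != -1, 0 <= e i & (`|d i| <= `|e i|)%N].
Proof.
split=> [in_m | [i [di ei le_de]] J HJ gensJ].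
  apply: NNPP => no_i.
  have e_lt_d i : 0 <= e i -> d i != -1 -> (`|e i| < `|d i|)%N.
    by move=> ei di; rewrite ltnNge; apply/negP => le_de; apply: no_i; exists i.
  have := mideal_sub_trunc_kernel in_m 0%N.
  by rewrite /= trunc_eval_ypow // => /eqP; rewrite oner_eq0.
have [[_ _ mulJ] _] := HJ.
rewrite /ypow (bigD1 i ei) /= mulrC; apply: mulJ.
exact: (mideal_iter_sigmaR di le_de HJ gensJ).
Qed.

Definition incr (c : nvec n) (i : 'I_n) : nvec n :=
  fun j => if j == i then c i + 1 else c j.

Lemma ypowD1 (c : nvec n) i :
  ypow c = (if 0 <= c i then iter `|c i| sigmaR (yvar k i) else 1) *
           \prod_(j < n | (0 <= c j) && (j != i)) iter `|c j| sigmaR (yvar k j).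
Proof.
rewrite /ypow; case: ifP => ci; first by rewrite (bigD1 i ci).
by rewrite mul1r; apply: eq_bigl => j; case: eqVneq => [->|]; rewrite ?ci ?andbT.
Qed.

Section CharacterVectors.
Variable I : dpoly -> Prop.

Lemma exists_char_vec_below (b : nvec n) :
  valid_vec b -> I (ypow b) -> exists2 c, is_char_vec sigma I c & vle c b.
Proof.
move Nb : (\sum_(i < n) absz (b i + 1)%R)%N => N.
elim/ltn_ind: N b Nb => N IH b Nb Vb Ib.
have [[c [Vc le_cb Ic ne_cb]] | b_min] :=
  classic (exists c, [/\ valid_vec c, vle c b, I (ypow c) & c <> b]); last first.
  exists b => [|i]; last lia.
  split=> // c Vc le_cb Ic; apply: NNPP => ne_cb; apply: b_min; by exists c.
have [i lt_cbi] : exists i, c i < b i.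
  by apply: not_vle_exists_lt => le_bc; apply: ne_cb; apply: vle_antisym.
have lt_measure : (\sum_(j < n) absz (c j + 1)%R < N)%N.
  rewrite -Nb (bigD1 i) //= [X in (_ < X)%N](bigD1 i) //=.
  have le_rest : (\sum_(j < n | j != i) absz (c j + 1)%R <=
                  \sum_(j < n | j != i) absz (b j + 1)%R)%N.
    by apply: leq_sum => j _; have := le_cb j; have := Vc j; lia.
  by rewrite -addSn; apply: leq_add le_rest; have := Vc i; lia.
have [c' char_c' le_cc'] := IH _ lt_measure c erefl Vc Ic.
by exists c' => // j; have := le_cc' j; have := le_cb j; lia.
Qed.

Hypotheses (HI : is_sigma_ideal sigma I) (HIwm : is_well_mixed sigma I).

(* Raising a nonnegative exponent c_i by one is the well-mixed step from
   a * b in I to a * sigma(b) in I. *)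
Lemma ypow_incr (c : nvec n) i :
  valid_vec c -> I (ypow c) -> I (ypow (incr c i)).
Proof.
move=> Vc Ic; have [[_ _ mulI] _] := HI.
have incr_i : incr c i i = c i + 1 by rewrite /incr eqxx.
have incr_j j : j != i -> incr c i j = c j by rewrite /incr => /negPf ->.
rewrite (ypowD1 _ i) incr_i ifT; last by have := Vc i; lia.
set rest := (X in _ * X).
have -> : rest = \prod_(j < n | (0 <= c j) && (j != i)) iter `|c j| sigmaR (yvar k j).
  by apply: eq_big => j; case: eqVneq => [//|/incr_j ->]; rewrite ?andbF.
move: Ic; rewrite (ypowD1 _ i); case: ifP => ci Ic.
  have -> : absz (c i + 1)%R = (absz (c i)).+1 by lia.
  by rewrite iterS mulrC; apply: HIwm; rewrite mulrC.
by rewrite mul1r in Ic; apply: mulI.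
Qed.

Lemma ypow_upward (b c : nvec n) :
  valid_vec c -> vle c b -> I (ypow c) -> I (ypow b).
Proof.
move Nbc : (\sum_(i < n) `|b i - c i|%N)%N => N.
elim/ltn_ind: N c Nbc => N IH c Nbc Vc le_cb Ic.
have [le_bc | /not_vle_exists_lt [i lt_cbi]] := classic (vle b c).
  by rewrite (vle_antisym le_bc le_cb).
apply: (IH _ _ (incr c i) erefl); last exact: ypow_incr.
- rewrite -Nbc (bigD1 i) //= [X in (_ < X)%N](bigD1 i) //= /incr eqxx.
  rewrite (eq_bigr (fun j => `|b j - c j|%N)) => [|j /negPf ->] //.
  by have := Vc i; lia.
- by move=> j; rewrite /incr; case: eqVneq => [<-|_]; have := Vc j; have := Vc i; lia.
- by move=> j; rewrite /incr; have := le_cb j; case: eqVneq => [->|_]; lia.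
Qed.

End CharacterVectors.

End DifferencePolynomials.

Theorem proposition7p2 (k : fieldType) (sigma : {rmorphism k -> k}) (n : nat)
  (Hchar : [pchar k] =i pred0)
  (I : dpoly k n -> Prop)
  (HI : is_sigma_ideal sigma I) (HIrad : is_radical I)
  (HIwm : is_well_mixed sigma I) (HImon : is_monomial_ideal I)
  (a : nvec n) (Ha : valid_vec a)
  (Hac : forall c, is_char_vec sigma I c -> vle c a)
  (b : nvec n) (Hb : valid_vec b) (Hba : vle b a) :
  ~ I (ypow sigma b) <-> alexander_dual sigma I a (ypow sigma (vsub a b)).
Proof.
split=> [b_notin c char_c | in_dual Ib].
- have le_ca := Hac c char_c; have [Vc Ic _] := char_c.
  have [i lt_bci] : exists i, b i < c i.
    apply: not_vle_exists_lt => le_cb; apply: b_notin.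
    exact: (ypow_upward HI HIwm Vc le_cb Ic).
  apply/mideal_ypowP; exists i; rewrite /vbslash /vsub.
  by have := Hb i; have := le_ca i; have := Hba i; case: ifP => ?; split; lia.
- have [c char_c le_cb] := exists_char_vec_below Hb Ib.
  have /mideal_ypowP [i []] := in_dual c char_c.
  rewrite /vbslash /vsub; have := Hac c char_c i; have := le_cb i.
  by have := Hb i; case: ifP => ?; lia.
Qed.
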